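(* Let $F$ be a field of characteristic not $2$, let $a\in F^*$ be a non-square, and let $L=F(\sqrt{a})$. Then $(F^{(4)}\cap L^{(3)})/F$ is a Galois extension.
   Context: All fields are taken inside a fixed quadratic closure $F_q$ of $F$. For a field $K$ of characteristic not $2$, define $K^{(1)}=K$ and, for $n\ge 1$, $K^{(n+1)}$ is the compositum of all quadratic extensions of $K^{(n)}$ which are Galois over $K$. *)

From HB Require Import structures.
From mathcomp Require Import all_boot all_order all_algebra.
Set Implicit Arguments. Unset Strict Implicit. Unset Printing Implicit Defensive.
Import GRing.Theory.
Local Open Scope ring_scope.

Section Defs.
Variable Om : fieldType.

Definition is_subfield (K : Om -> Prop) : Prop :=
  [/\ K 0, K 1, (forall x y, K x -> K y -> K (x - y)),
      (forall x y, K x -> K y -> K (x * y)) & (forall x, K x -> K x^-1)].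

Definition generated (S : Om -> Prop) : Om -> Prop :=
  fun x => forall K, is_subfield K -> (forall y, S y -> K y) -> K x.

Definition adjoin (K : Om -> Prop) (s : Om) : Om -> Prop :=
  generated (fun x => K x \/ x = s).

Definition is_quadratic_closure (F : Om -> Prop) : Prop :=
  (forall x : Om, exists y, y * y = x) /\
  (forall K, is_subfield K -> (forall x, F x -> K x) ->
     (forall x, K x -> exists y, K y /\ y * y = x) -> forall x, K x).

Definition is_minpoly (K : Om -> Prop) (x : Om) (p : {poly Om}) : Prop :=
  [/\ p \is monic, (forall i, K p`_i), root p x &
      forall q : {poly Om}, (forall i, K q`_i) -> q != 0 -> root q x ->
        (size p <= size q)%N].

(* M / K is a Galois extension (algebraic, normal, separable): M is a field
   containing K and the minimal polynomial over K of every element of M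
   splits over M into distinct linear factors. *)
Definition galois_ext (K M : Om -> Prop) : Prop :=
  [/\ is_subfield K, is_subfield M, (forall x, K x -> M x) &
      forall x, M x -> exists p, is_minpoly K x p /\
        exists rs : seq Om, [/\ uniq rs, (forall r, r \in rs -> M r) &
                               p = \prod_(r <- rs) ('X - r%:P)]].

Definition quad_ext (K M : Om -> Prop) : Prop :=
  [/\ is_subfield M, (forall x, K x -> M x) &
      exists y, [/\ M y, ~ K y &
        forall z, M z -> exists u v, [/\ K u, K v & z = u + v * y]]].

Definition next_step (K Kn : Om -> Prop) : Om -> Prop :=
  generated (fun x => Kn x \/ exists M, [/\ quad_ext Kn M, galois_ext K M & M x]).

(* higher K n = K^{(n+1)} (so higher K 0 = K^{(1)} = K) *)
Fixpoint higher (K : Om -> Prop) (n : nat) : Om -> Prop :=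
  match n with
  | O => K
  | S m => next_step K (higher K m)
  end.
End Defs.

From mathcomp Require Import all_boot all_order all_algebra.
From mathcomp Require Import ring.
From Stdlib Require Import ClassicalEpsilon.
Set Implicit Arguments. Unset Strict Implicit. Unset Printing Implicit Defensive.
Import GRing.Theory.
Local Open Scope ring_scope.

(* Everything happens inside the finite towers F(z_1)...(z_k), z_i^2 in F(z_1)...(z_(i-1)),
   of the quadratically closed field Om.  An F-embedding of such a tower into Om extends to
   any larger tower, since Om contains a square root of the image of every z_i^2; a tower
   closed under its F-embeddings is Galois over F, the minimal polynomial of x being the
   product of the X - s x over its distinct conjugates s x.  So an extension of F made of
   tower elements is Galois as soon as it contains the conjugates of its elements.
   For K = F and for K = L = F(s) this property is inherited by every K^(n): an element of a
   quadratic extension M = K^(n)(r) of K^(n), Galois over K, is sent by a conjugation to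
   K^(n)(r'), r' a conjugate of r, and K^(n)(r') is again a quadratic extension of K^(n),
   Galois over K (its K-conjugates are transported from those of M), hence lies in
   K^(n+1).  Finally the property passes to the intersection F^(4) ∩ L^(3). *)

Section Subfields.
Variable Om : fieldType.
Implicit Types (B K S : Om -> Prop) (u v x y z : Om).

Section SubfieldTheory.
Variable K : Om -> Prop.
Hypothesis hK : is_subfield K.

Lemma subf0 : K 0. Proof. by case: hK. Qed.
Lemma subf1 : K 1. Proof. by case: hK. Qed.
Lemma subfB x y : K x -> K y -> K (x - y). Proof. by case: hK => _ _ h _ _; apply: h. Qed.
Lemma subfM x y : K x -> K y -> K (x * y). Proof. by case: hK => _ _ _ h _; apply: h. Qed.
Lemma subfV x : K x -> K x^-1. Proof. by case: hK => _ _ _ _ h; apply: h. Qed.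
Lemma subfN x : K x -> K (- x).
Proof. by move=> kx; rewrite -sub0r; apply: subfB; first exact: subf0. Qed.
Lemma subfD x y : K x -> K y -> K (x + y).
Proof. by move=> kx ky; rewrite -[y]opprK; apply: subfB => //; apply: subfN. Qed.
Lemma subfX x n : K x -> K (x ^+ n).
Proof.
by move=> kx; elim: n => [|n IH]; [rewrite expr0; exact: subf1 | rewrite exprS; apply: subfM].
Qed.
Lemma subf_nat n : K n%:R.
Proof.
by elim: n => [|n IH]; [exact: subf0 | rewrite -addn1 natrD; apply: subfD => //; exact: subf1].
Qed.

End SubfieldTheory.

Lemma subfieldI K K' : is_subfield K -> is_subfield K' -> is_subfield (fun x => K x /\ K' x).
Proof.
move=> hK hK'; split.
- by split; apply: subf0.
- by split; apply: subf1.
- by move=> x y [? ?] [? ?]; split; apply: subfB.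
- by move=> x y [? ?] [? ?]; split; apply: subfM.
- by move=> x [? ?]; split; apply: subfV.
Qed.

Lemma generated_subfield S : is_subfield (generated S).
Proof.
split.
- by move=> K hK _; apply: subf0.
- by move=> K hK _; apply: subf1.
- by move=> x y hx hy K hK hS; apply: subfB => //; [apply: hx | apply: hy].
- by move=> x y hx hy K hK hS; apply: subfM => //; [apply: hx | apply: hy].
- by move=> x hx K hK hS; apply: subfV => //; apply: hx.
Qed.

Lemma sub_generated S x : S x -> generated S x.
Proof. by move=> hx K _ hS; apply: hS. Qed.

Lemma generated_min S K : is_subfield K -> (forall y, S y -> K y) ->
  forall x, generated S x -> K x.
Proof. by move=> hK hS x hx; apply: hx. Qed.

Lemma generated_mono S S' : (forall y, S y -> S' y) ->
  forall x, generated S x -> generated S' x.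
Proof.
move=> hS; apply: generated_min; first exact: generated_subfield.
by move=> y /hS; apply: sub_generated.
Qed.

Lemma adjoin_subfield K z : is_subfield (adjoin K z). Proof. exact: generated_subfield. Qed.
Lemma adjoin_base K z x : K x -> adjoin K z x. Proof. by move=> kx; apply: sub_generated; left. Qed.
Lemma adjoin_gen K z : adjoin K z z. Proof. by apply: sub_generated; right. Qed.

Lemma adjoin_min K z E : is_subfield E -> (forall x, K x -> E x) -> E z ->
  forall x, adjoin K z x -> E x.
Proof. by move=> hE hK hz; apply: generated_min => // y [/hK | ->]. Qed.

Lemma adjoin_id K z : is_subfield K -> K z -> forall x, adjoin K z x -> K x.
Proof. by move=> hK kz; apply: adjoin_min. Qed.

Lemma mul_self_eq x y : x * x = y * y -> x = y \/ x = - y.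
Proof.
by move=> e; have := eqf_sqr x y; rewrite !expr2 e eqxx => /esym/orP[] /eqP; [left | right].
Qed.

Definition quad_span K z x := exists u v, [/\ K u, K v & x = u + v * z].

Lemma quad_span_base K z x : is_subfield K -> K x -> quad_span K z x.
Proof. by move=> hK kx; exists x, 0; rewrite mul0r addr0; split => //; exact: subf0. Qed.

Lemma quad_spanV K z x : is_subfield K -> K (z * z) -> quad_span K z x -> quad_span K z x^-1.
Proof.
move=> hK kzz [u [v [ku kv ->]]].
have [kz|nkz] := classic (K z).
  by apply: quad_span_base => //; apply: subfV => //; apply: subfD => //; apply: subfM.
set n := u * u - v * v * (z * z).
have kn : K n by apply: subfB => //; apply: subfM => //; apply: subfM.
have [n0|nn0] := eqVneq n 0.
  have e : u * u = v * v * (z * z) by apply/eqP; rewrite -subr_eq0; apply/eqP.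
  have v0 : v = 0.
    have [//|v0] := eqVneq v 0; exfalso; apply: nkz.
    have e' : z * z = u / v * (u / v).
      by apply: (mulIf (mulf_neq0 v0 v0)); rewrite [z * z * _]mulrC -e; field.
    case: (mul_self_eq e') => ->.
    - by apply: subfM => //; apply: subfV.
    - by apply: subfN => //; apply: subfM => //; apply: subfV.
  have u0 : u = 0 by move/eqP: e; rewrite v0 !mul0r mulf_eq0 orbb => /eqP.
  by rewrite u0 v0 mul0r addr0 invr0; apply: quad_span_base => //; exact: subf0.
(* (u + v z)^-1 = (u - v z) / n, where n is the norm of u + v z *)
have kn' : K n^-1 by apply: subfV.
exists (u / n), (- v / n); split; [exact: subfM | apply: subfM => //; exact: subfN |].
have w0 : u + v * z != 0.
  by apply: contra_neq nn0 => w0; rewrite /n -[u](addrK (v * z)) w0; ring.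
by apply: (mulfI w0); rewrite mulfV //; rewrite /n in nn0 *; field.
Qed.

Lemma adjoin_quadE K z x : is_subfield K -> K (z * z) -> adjoin K z x <-> quad_span K z x.
Proof.
move=> hK kzz; split; last first.
  case=> u [v [ku kv ->]]; have hA := adjoin_subfield K z.
  apply: (subfD hA); first exact: adjoin_base.
  by apply: (subfM hA); [exact: adjoin_base | exact: adjoin_gen].
apply: adjoin_min => [| y /(quad_span_base z hK) // |]; last first.
  by exists 0, 1; split; [exact: subf0 | exact: subf1 | ring].
split.
- exact: quad_span_base (subf0 hK).
- exact: quad_span_base (subf1 hK).
- move=> x1 y1 [u [v [ku kv ->]]] [u' [v' [ku' kv' ->]]].
  by exists (u - u'), (v - v'); split; try apply: subfB => //; ring.
- move=> x1 y1 [u [v [ku kv ->]]] [u' [v' [ku' kv' ->]]].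
  exists (u * u' + v * v' * (z * z)), (u * v' + v * u'); split; last by ring.
    by apply: subfD => //; apply: subfM => //; apply: subfM.
  by apply: subfD => //; apply: subfM.
- by move=> ?; apply: quad_spanV.
Qed.

Lemma quad_coord_uniq K z u v u' v' : is_subfield K -> ~ K z -> K u -> K v -> K u' -> K v' ->
  u + v * z = u' + v' * z -> u = u' /\ v = v'.
Proof.
move=> hK nkz ku kv ku' kv' e.
have vv' : v = v'.
  have [//|ne] := eqVneq v v'; exfalso; apply: nkz.
  have -> : z = (u' - u) / (v - v').
    apply: (mulIf (_ : v - v' != 0)); first by rewrite subr_eq0.
    by rewrite mulfVK ?subr_eq0 // -[u'](addrK (v' * z)) -e; ring.
  by apply: subfM => //; [apply: subfB | apply: subfV => //; apply: subfB].
by split => //; move: e; rewrite vv' => /addIr.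
Qed.

End Subfields.

Arguments adjoin_base {Om K z x}.
Arguments adjoin_gen {Om K z}.

Section Towers.
Variable Om : fieldType.
Implicit Types (B E K T : Om -> Prop) (zs ys : seq Om) (x y z : Om).

(* [tower B [:: z_n; ...; z_1]] is B(z_1)...(z_n): the head of the list is adjoined last. *)
Fixpoint tower B zs : Om -> Prop :=
  if zs is z :: zs' then adjoin (tower B zs') z else B.

Fixpoint is_tower B zs : Prop :=
  if zs is z :: zs' then is_tower B zs' /\ tower B zs' (z * z) else True.

Lemma tower_subfield B zs : is_subfield B -> is_subfield (tower B zs).
Proof. by case: zs => [|z zs] //= _; apply: adjoin_subfield. Qed.

Lemma tower_base B zs x : B x -> tower B zs x.
Proof. by elim: zs => [|z zs IH] //= /IH; apply: adjoin_base. Qed.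

Lemma tower_mem B zs z : z \in zs -> tower B zs z.
Proof.
elim: zs => [|z' zs IH] //=; rewrite inE => /orP[/eqP-> | /IH]; first exact: adjoin_gen.
exact: adjoin_base.
Qed.

Lemma tower_min B zs E : is_subfield E -> (forall x, B x -> E x) ->
  (forall z, z \in zs -> E z) -> forall x, tower B zs x -> E x.
Proof.
move=> hE; elim: zs => [|z zs IH] //= hB hz.
apply: adjoin_min => //; last by apply: hz; rewrite mem_head.
by apply: IH => // z' hz'; apply: hz; rewrite inE hz' orbT.
Qed.

Lemma tower_mono B B' zs : (forall x, B x -> B' x) -> forall x, tower B zs x -> tower B' zs x.
Proof.
elim: zs => [|z zs IH] //= hB; apply: generated_mono => y [ty | ->]; last by right.
by left; apply: IH.
Qed.

Lemma is_tower_mono B B' zs : (forall x, B x -> B' x) -> is_tower B zs -> is_tower B' zs.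
Proof.
elim: zs => [|z zs IH] //= hB [vzs hzz]; split; first exact: IH.
exact: tower_mono hzz.
Qed.

Lemma tower_cat B zs ys : tower B (zs ++ ys) = tower (tower B ys) zs.
Proof. by elim: zs => [|z zs IH] //=; rewrite IH. Qed.

Lemma is_tower_catP B zs ys : is_tower B (zs ++ ys) <-> is_tower (tower B ys) zs /\ is_tower B ys.
Proof.
elim: zs => [|z zs IH] /=; first by split => // [[]].
rewrite tower_cat; split; first by case=> /IH [? ?] ?.
by case=> [[? ?] ?]; split => //; apply/IH.
Qed.

Lemma tower_catl B zs ys x : tower B zs x -> tower B (zs ++ ys) x.
Proof. by rewrite tower_cat; apply: tower_mono => y; apply: tower_base. Qed.

Lemma tower_catr B zs ys x : tower B ys x -> tower B (zs ++ ys) x.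
Proof. by rewrite tower_cat; apply: tower_base. Qed.

Lemma is_tower_cat B zs ys : is_tower B zs -> is_tower B ys -> is_tower B (zs ++ ys).
Proof.
move=> vzs vys; apply/is_tower_catP; split => //.
by apply: is_tower_mono vzs => x; apply: tower_base.
Qed.

Lemma tower_over_eq B K zs : is_subfield B -> (forall x, B x -> K x) ->
  (forall x, K x -> tower B zs x) -> forall x, tower K zs x <-> tower B zs x.
Proof.
move=> hB hBK hKt x; split; last exact: tower_mono.
by apply: tower_min => //; [exact: tower_subfield | exact: tower_mem].
Qed.

(* [s] is a ring morphism on [E] fixing [B] pointwise; its values off [E] are irrelevant. *)
Definition khom B E (s : Om -> Om) : Prop :=
  [/\ forall x, B x -> s x = x,
      forall x y, E x -> E y -> s (x + y) = s x + s y &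
      forall x y, E x -> E y -> s (x * y) = s x * s y].

Section KHomTheory.
Variables (B E : Om -> Prop) (s : Om -> Om).
Hypotheses (hE : is_subfield E) (hB1 : B 1) (hs : khom B E s).

Lemma khom_fix x : B x -> s x = x. Proof. by case: hs => h _ _; apply: h. Qed.
Lemma khomD x y : E x -> E y -> s (x + y) = s x + s y. Proof. by case: hs => _ h _; apply: h. Qed.
Lemma khomM x y : E x -> E y -> s (x * y) = s x * s y. Proof. by case: hs => _ _ h; apply: h. Qed.
Lemma khom1 : s 1 = 1. Proof. exact: khom_fix. Qed.

Lemma khom0 : s 0 = 0.
Proof. by apply: (@addrI _ (s 0)); rewrite -khomD ?addr0 //; exact: subf0. Qed.

Lemma khomN x : E x -> s (- x) = - s x.
Proof.
move=> ex; apply/eqP; rewrite -subr_eq0 opprK -khomD ?addNr ?khom0 //.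
exact: subfN.
Qed.

Lemma khomB x y : E x -> E y -> s (x - y) = s x - s y.
Proof. by move=> ex ey; rewrite khomD ?khomN //; exact: subfN. Qed.

Lemma khomX x n : E x -> s (x ^+ n) = s x ^+ n.
Proof.
move=> ex; elim: n => [|n IH]; first by rewrite !expr0 khom1.
by rewrite !exprS khomM ?IH //; exact: subfX.
Qed.

Lemma khom_mulfV x : E x -> x != 0 -> s x * s x^-1 = 1.
Proof. by move=> ex x0; rewrite -khomM ?mulfV ?khom1 //; exact: subfV. Qed.

Lemma khomV x : E x -> s x^-1 = (s x)^-1.
Proof.
move=> ex; have [->|x0] := eqVneq x 0; first by rewrite invr0 khom0 invr0.
have sx0 : s x != 0.
  by apply: contra_eq_neq (khom_mulfV ex x0) => ->; rewrite mul0r eq_sym oner_neq0.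
by apply: (mulfI sx0); rewrite khom_mulfV // mulfV.
Qed.

Lemma khom_inj x y : E x -> E y -> s x = s y -> x = y.
Proof.
move=> ex ey e; apply/eqP; rewrite -subr_eq0; apply/negPn/negP => xy0.
have := khom_mulfV (subfB hE ex ey) xy0.
by rewrite khomB // e subrr mul0r => /eqP; rewrite eq_sym oner_eq0.
Qed.

Lemma khom_sum (I : Type) (r : seq I) (P : pred I) (f : I -> Om) : (forall i, E (f i)) ->
  E (\sum_(i <- r | P i) f i) /\ s (\sum_(i <- r | P i) f i) = \sum_(i <- r | P i) s (f i).
Proof.
move=> hf; apply: (big_ind2 (fun a b => E a /\ s a = b)).
- by split; [exact: subf0 | exact: khom0].
- by move=> a1 a2 b1 b2 [ea <-] [eb <-]; split; [exact: subfD | rewrite khomD].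
- by move=> i _; split.
Qed.

Lemma khom_horner (p : {poly Om}) x : (forall x, B x -> E x) -> (forall i, B p`_i) -> E x ->
  s p.[x] = p.[s x].
Proof.
move=> hBE hp ex; rewrite !horner_coef.
have hf (i : 'I_(size p)) : E (p`_i * x ^+ i) := subfM hE (hBE _ (hp i)) (subfX hE _ ex).
have [_ ->] := khom_sum (index_enum _) xpredT hf.
apply: eq_bigr => i _.
by rewrite khomM ?khomX ?(khom_fix (hp i)) //; [exact: hBE | exact: subfX].
Qed.

Lemma khom_prod_XsubC_coef (l : seq Om) : (forall r, r \in l -> E r) ->
  forall i, E (\prod_(r <- l) ('X - r%:P))`_i /\
    s (\prod_(r <- l) ('X - r%:P))`_i = (\prod_(r <- map s l) ('X - r%:P))`_i.
Proof.
elim: l => [|a l IH] hl i.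
  rewrite /= !big_nil coefC; case: (i == 0)%N.
    by split; [exact: subf1 | exact: khom1].
  by split; [exact: subf0 | exact: khom0].
have hl' r : r \in l -> E r by move=> h; apply: hl; rewrite inE h orbT.
have ea : E a by apply: hl; rewrite mem_head.
rewrite /= !big_cons !mulrBl !coefB !coefXM !coefCM.
have [e1 s1] := IH hl' i; have [e2 s2] := IH hl' i.-1.
have em := subfM hE ea e1.
case: (i == 0)%N => /=.
  by split; [exact: (subfB hE (subf0 hE) em) | rewrite khomB ?khom0 ?khomM ?s1 //; exact: subf0].
by split; [exact: (subfB hE e2 em) | rewrite khomB ?khomM ?s1 ?s2].
Qed.

End KHomTheory.

Lemma khom_subE B E E' s : (forall x, E' x -> E x) -> khom B E s -> khom B E' s.
Proof. by move=> h [h1 h2 h3]; split => // x y /h ? /h ?; [apply: h2 | apply: h3]. Qed.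

Lemma khom_subB B B' E s : (forall x, B' x -> B x) -> khom B E s -> khom B' E s.
Proof. by move=> h [h1 h2 h3]; split => // x /h; apply: h1. Qed.

Lemma khom_id B E : khom B E id. Proof. by []. Qed.

Lemma khom_comp B E s r : khom B E s -> khom B E r -> (forall x, E x -> E (r x)) ->
  khom B E (s \o r).
Proof.
move=> [s1 s2 s3] [r1 r2 r3] hr; split => /=.
- by move=> x bx; rewrite r1 // s1.
- by move=> x y ex ey; rewrite r2 // s2 //; apply: hr.
- by move=> x y ex ey; rewrite r3 // s3 //; apply: hr.
Qed.

Lemma subfield_preim B E s X Y : is_subfield E -> B 1 -> khom B E s -> is_subfield X ->
  (forall x, X x -> E x) -> is_subfield Y -> is_subfield (fun x => X x /\ Y (s x)).
Proof.
move=> hE hB1 hs hX hXE hY; split.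
- by split; [exact: subf0 | rewrite (khom0 hE hs); exact: subf0].
- by split; [exact: subf1 | rewrite (khom1 hB1 hs); exact: subf1].
- move=> x y [hx1 hx2] [hy1 hy2]; split; first exact: (subfB hX hx1 hy1).
  by rewrite (khomB hE hs (hXE _ hx1) (hXE _ hy1)); apply: subfB.
- move=> x y [hx1 hx2] [hy1 hy2]; split; first exact: (subfM hX hx1 hy1).
  by rewrite (khomM hs (hXE _ hx1) (hXE _ hy1)); apply: subfM.
- move=> x [hx1 hx2]; split; first exact: (subfV hX hx1).
  by rewrite (khomV hE hB1 hs (hXE _ hx1)); apply: subfV.
Qed.

Lemma khom_tower_image B E s T zs Y : is_subfield E -> B 1 -> khom B E s -> is_subfield T ->
  (forall x, tower T zs x -> E x) -> is_subfield Y ->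
  (forall x, T x -> Y (s x)) -> (forall z, z \in zs -> Y (s z)) ->
  forall x, tower T zs x -> Y (s x).
Proof.
move=> hE hB1 hs hT hTE hY hTY hz x hx.
have hP := subfield_preim hE hB1 hs (tower_subfield zs hT) hTE hY.
suff [] : tower T zs x /\ Y (s x) by [].
apply: (tower_min hP) hx => [y ty | z' hz'].
  by split; [exact: tower_base | exact: hTY].
by split; [exact: tower_mem | exact: hz].
Qed.

Lemma khom_adjoin_ext B K s z w : is_subfield K -> (forall x, B x -> K x) -> B 1 -> khom B K s ->
  ~ K z -> K (z * z) -> w * w = s (z * z) ->
  exists s', [/\ khom B (adjoin K z) s', forall x, K x -> s' x = s x & s' z = w].
Proof.
move=> hK hBK hB1 hs nkz kzz hw.
(* well defined, the coordinates (u, v) of x = u + v z over K being unique *)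
pose P x (p : Om * Om) := [/\ K p.1, K p.2 & x = p.1 + p.2 * z].
pose c x := epsilon (inhabits (0, 0)) (P x).
pose s' x := s (c x).1 + s (c x).2 * w.
have s'E u v : K u -> K v -> s' (u + v * z) = s u + s v * w.
  move=> ku kv; rewrite /s'; have [k1 k2 e] : P (u + v * z) (c (u + v * z)).
    by apply: epsilon_spec; exists (u, v).
  by have [-> ->] := quad_coord_uniq hK nkz k1 k2 ku kv (esym e).
have K0 := subf0 hK.
have s'K x : K x -> s' x = s x.
  by move=> kx; have := s'E x 0 kx K0; rewrite mul0r addr0 (khom0 hK hs) mul0r addr0.
have rep x : adjoin K z x -> quad_span K z x by move/(adjoin_quadE _ hK kzz).
exists s'; split => //; last first.
  by have := s'E 0 1 K0 (subf1 hK); rewrite mul1r add0r (khom0 hK hs) (khom1 hB1 hs) add0r mul1r.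
split.
- by move=> x bx; rewrite s'K ?(khom_fix hs) //; exact: hBK.
- move=> x y /rep [u [v [ku kv ->]]] /rep [u' [v' [ku' kv' ->]]].
  have -> : u + v * z + (u' + v' * z) = (u + u') + (v + v') * z by ring.
  by rewrite !s'E ?(khomD hs) //; [ring | exact: subfD | exact: subfD].
- move=> x y /rep [u [v [ku kv ->]]] /rep [u' [v' [ku' kv' ->]]].
  have -> : (u + v * z) * (u' + v' * z) =
      (u * u' + v * v' * (z * z)) + (u * v' + v * u') * z by ring.
  have kvv := subfM hK kv kv'; have kvvz := subfM hK kvv kzz.
  have kuu := subfM hK ku ku'; have kuv := subfM hK ku kv'; have kvu := subfM hK kv ku'.
  rewrite !s'E //; try by apply: (subfD hK).
  by rewrite !(khomD hs) // (khomM hs kvv kzz) -hw !(khomM hs) //; ring.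
Qed.

End Towers.

Definition propb (P : Prop) : bool := if excluded_middle_informative P then true else false.

Lemma propbP (P : Prop) : reflect P (propb P).
Proof. by rewrite /propb; case: excluded_middle_informative => h; constructor. Qed.

Section QuadraticallyClosed.
Variable Om : fieldType.
Hypotheses (hchar : (2%:R : Om) != 0) (hsq : forall x : Om, exists y, y * y = x).
Implicit Types (B K N T : Om -> Prop) (zs ys : seq Om) (x y z : Om).

Let qroot_ex x : exists y, y * y == x. Proof. by have [y <-] := hsq x; exists y. Qed.
Definition qroot x := xchoose (qroot_ex x).
Lemma qrootK x : qroot x * qroot x = x. Proof. exact/eqP/(xchooseP (qroot_ex x)). Qed.

Lemma khom_tower_ext B T zs s : is_subfield T -> (forall x, B x -> T x) -> B 1 ->
  is_tower T zs -> khom B T s -> exists s', khom B (tower T zs) s' /\ forall x, T x -> s' x = s x.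
Proof.
move=> hT hBT hB1; elim: zs => [|z zs IH] /=; first by move=> _ hs; exists s.
case=> vzs kzz hs; have [s1 [hs1 s1E]] := IH vzs hs.
have hT0 := tower_subfield zs hT.
have [kz|nkz] := classic (tower T zs z).
  by exists s1; split => //; apply: khom_subE hs1; exact: adjoin_id.
have hBT0 x : B x -> tower T zs x by move/hBT; apply: tower_base.
have [s' [hs' s'E _]] := khom_adjoin_ext hT0 hBT0 hB1 hs1 nkz kzz (qrootK (s1 (z * z))).
by exists s'; split => // x tx; rewrite s'E ?s1E //; exact: tower_base.
Qed.

Lemma khom_extend B T zs ys s : is_subfield T -> (forall x, B x -> tower T zs x) -> B 1 ->
  is_tower T zs -> is_tower T ys -> khom B (tower T zs) s ->
  exists s', khom B (tower T ys) s' /\ forall x, tower T zs x -> s' x = s x.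
Proof.
move=> hT hB hB1 vzs vys hs.
have vys' : is_tower (tower T zs) ys by apply: is_tower_mono vys => x; apply: tower_base.
have [s' [hs' s'E]] := khom_tower_ext (tower_subfield zs hT) hB hB1 vys' hs.
by exists s'; split => //; apply: khom_subE hs'; apply: tower_mono => x; apply: tower_base.
Qed.

Lemma khom_adjoin_conj B T z : is_subfield T -> (forall x, B x -> T x) -> B 1 ->
  ~ T z -> T (z * z) ->
  exists s, [/\ khom B (adjoin T z) s, forall x, T x -> s x = x & s z = - z].
Proof.
move=> hT hBT hB1 nkz kzz; have hw : - z * - z = id (z * z) by rewrite mulrNN.
exact: (khom_adjoin_ext hT hBT hB1 (khom_id B T) nkz kzz hw).
Qed.

Lemma tower_fixed B zs c : is_subfield B -> is_tower B zs -> tower B zs c ->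
  (forall s, khom B (tower B zs) s -> s c = c) -> B c.
Proof.
move=> hB; have hB1 := subf1 hB.
elim: zs c => [|z zs IH] c //=; case=> vzs kzz hc hfix.
have hT := tower_subfield zs hB.
have hBT x : B x -> tower B zs x by apply: tower_base.
have [kz|nkz] := classic (tower B zs z).
  apply: (IH c vzs) => [|s hs]; first exact: (adjoin_id hT kz hc).
  by apply: hfix; apply: khom_subE hs; exact: (adjoin_id hT kz).
have [u [v [ku kv ec]]] := (adjoin_quadE _ hT kzz).1 hc.
(* the conjugation z |-> -z of T(z)/T fixes only T, since 2 != 0 *)
have cu : c = u.
  have [s [hs sT sz]] := khom_adjoin_conj hT hBT hB1 nkz kzz.
  have hA := adjoin_subfield (tower B zs) z.
  have Av : adjoin (tower B zs) z v := adjoin_base kv.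
  have Avz := subfM hA Av adjoin_gen.
  have : u + - (v * z) = u + v * z.
    rewrite -ec -(hfix s hs) ec (khomD hs (adjoin_base ku) Avz) (khomM hs Av adjoin_gen).
    by rewrite (sT _ ku) (sT _ kv) sz mulrN.
  move/addrI/eqP; rewrite eq_sym -subr_eq0 opprK -mulr2n -mulr_natr.
  rewrite !mulf_eq0 (negPf hchar) orbF => /orP[] /eqP v0; first by rewrite ec v0 mul0r addr0.
  by case: nkz; rewrite v0; exact: subf0.
rewrite cu; apply: IH => // s hs.
have [s' [hs' s'E _]] := khom_adjoin_ext hT hBT hB1 hs nkz kzz (qrootK (s (z * z))).
by rewrite -s'E // -cu hfix.
Qed.

Lemma tower_conj_finite B zs x : is_subfield B -> is_tower B zs -> tower B zs x ->
  exists l : seq Om, forall s, khom B (tower B zs) s -> s x \in l.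
Proof.
move=> hB; elim: zs x => [|z zs IH] x /=.
  by move=> _ bx; exists [:: x] => s hs; rewrite (khom_fix hs) // mem_head.
case=> vzs kzz hx; have hT := tower_subfield zs hB.
have [u [v [ku kv ->]]] := (adjoin_quadE _ hT kzz).1 hx.
have [lu hu] := IH u vzs ku; have [lv hv] := IH v vzs kv; have [lz hlz] := IH _ vzs kzz.
pose lr := map qroot lz ++ map (fun e => - qroot e) lz.
exists [seq a + bc | a <- lu, bc <- [seq b * c | b <- lv, c <- lr]] => s hs.
have hsT : khom B (tower B zs) s by apply: khom_subE hs => y; apply: adjoin_base.
have hA := adjoin_subfield (tower B zs) z.
have Av : adjoin (tower B zs) z v := adjoin_base kv.
rewrite (khomD hs) ?(khomM hs) //; try exact: adjoin_base; try exact: adjoin_gen.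
  2: exact: (subfM hA Av adjoin_gen).
apply: allpairs_f; first exact: hu.
apply: allpairs_f; first exact: hv.
have hsz : s z * s z = qroot (s (z * z)) * qroot (s (z * z)).
  by rewrite qrootK (khomM hs) //; exact: adjoin_gen.
have hzz : s (z * z) \in lz by apply: hlz.
rewrite mem_cat; case: (mul_self_eq hsz) => ->; first by rewrite map_f.
by rewrite (map_f (fun e => - qroot e) hzz) orbT.
Qed.

Definition khom_closed B N := forall s, khom B N s -> forall y, N y -> N (s y).

Lemma tower_conj_set B zs x : is_subfield B -> is_tower B zs ->
  khom_closed B (tower B zs) -> tower B zs x ->
  exists E : seq Om, [/\ uniq E,
    forall e, e \in E <-> exists s, khom B (tower B zs) s /\ e = s x &
    forall s, khom B (tower B zs) s -> perm_eq (map s E) E].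
Proof.
move=> hB vzs hN hx; set N := tower B zs.
have [l hl] := tower_conj_finite hB vzs hx.
pose P e := exists s, khom B N s /\ e = s x.
pose E := [seq e <- undup l | propb (P e)].
have EP e : e \in E <-> P e.
  rewrite mem_filter mem_undup; split; first by case/andP => /propbP.
  by move=> Pe; apply/andP; split; [exact/propbP | case: Pe => s [hs ->]; exact: hl].
have EN e : e \in E -> N e by case/EP => s [hs ->]; apply: hN.
have uE : uniq E by rewrite filter_uniq // undup_uniq.
exists E; split => // s hs.
have usE : uniq (map s E).
  rewrite map_inj_in_uniq // => a b /EN ha /EN hb.
  exact: (khom_inj (tower_subfield zs hB) (subf1 hB) hs ha hb).
have sub_sE : {subset map s E <= E}.
  move=> e /mapP [e' /EP [r [hr ->]] ->]; apply/EP; exists (s \o r); split => //.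
  by apply: khom_comp => // y /hN; apply.
have [_ eqE] := uniq_min_size usE sub_sE (eq_leq (esym (size_map s E))).
exact: uniq_perm.
Qed.

Lemma khom_closed_surj B zs s y : is_subfield B -> is_tower B zs ->
  khom_closed B (tower B zs) -> khom B (tower B zs) s -> tower B zs y ->
  exists y', tower B zs y' /\ s y' = y.
Proof.
move=> hB vzs hN hs hy.
have [E [_ EP permE]] := tower_conj_set hB vzs hN hy.
have : y \in map s E by rewrite (perm_mem (permE s hs)); apply/EP; exists id; split.
case/mapP => y' /EP [r [hr ->]] ->; exists (r y); split => //; exact: hN.
Qed.

Lemma khom_closed_inv B zs s : is_subfield B -> is_tower B zs ->
  khom_closed B (tower B zs) -> khom B (tower B zs) s ->
  exists r, [/\ khom B (tower B zs) r,
    forall y, tower B zs y -> tower B zs (r y) /\ s (r y) = y &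
    forall y, tower B zs y -> r (s y) = y].
Proof.
move=> hB vzs hN hs; set N := tower B zs.
have hNf : is_subfield N := tower_subfield zs hB.
pose r y := epsilon (inhabits 0) (fun y' => N y' /\ s y' = y).
have rK y : N y -> N (r y) /\ s (r y) = y.
  move=> ny; apply: (epsilon_spec (inhabits 0) (fun y' => N y' /\ s y' = y)).
  exact: khom_closed_surj.
have inj := khom_inj hNf (subf1 hB) hs.
have sK y : N y -> r (s y) = y.
  by move=> ny; have [h1 h2] := rK (s y) (hN _ hs _ ny); exact: inj h2.
exists r; split => //; split.
- by move=> x bx; rewrite -{1}(khom_fix hs bx) sK //; exact: tower_base.
- move=> x y nx ny; have [rx sx] := rK x nx; have [ry sy] := rK y ny.
  by rewrite -{1}sx -{1}sy -(khomD hs) // sK //; exact: subfD.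
- move=> x y nx ny; have [rx sx] := rK x nx; have [ry sy] := rK y ny.
  by rewrite -{1}sx -{1}sy -(khomM hs) // sK //; exact: subfM.
Qed.

Lemma is_tower_qroots T (l : seq Om) : (forall e, e \in l -> T e) -> is_tower T (map qroot l).
Proof.
elim: l => [|e l IH] //= hl; split; first by apply: IH => e' he'; apply: hl; rewrite inE he' orbT.
by rewrite qrootK; apply: tower_base; apply: hl; rewrite mem_head.
Qed.

Lemma khom_closed_qroots B zs (E : seq Om) : is_subfield B -> is_tower B zs ->
  khom_closed B (tower B zs) -> (forall e, e \in E -> tower B zs e) ->
  (forall s, khom B (tower B zs) s -> forall e, e \in E -> s e \in E) ->
  is_tower B (map qroot E ++ zs) /\ khom_closed B (tower B (map qroot E ++ zs)).
Proof.
move=> hB vzs hN hE hsE; set N := tower B zs.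
have hNf : is_subfield N := tower_subfield zs hB.
rewrite tower_cat; set M := tower N (map qroot E).
have hM : is_subfield M := tower_subfield _ hNf.
have NM x : N x -> M x by apply: tower_base.
have qrootM e : e \in E -> M (qroot e) by move=> he; apply: tower_mem; exact: map_f.
split; first by apply/is_tower_catP; split => //; exact: is_tower_qroots.
move=> s hs; have hsN : khom B N s by apply: khom_subE hs.
apply: (khom_tower_image hM (subf1 hB) hs hNf (fun x h => h) hM).
- by move=> x nx; apply: NM; exact: hN.
- move=> z /mapP [e he ->]; have hse := hsE s hsN e he.
  have e2 : s (qroot e) * s (qroot e) = qroot (s e) * qroot (s e).
    by rewrite -(khomM hs (qrootM _ he) (qrootM _ he)) !qrootK.
  by case: (mul_self_eq e2) => ->; [exact: qrootM | exact: (subfN hM (qrootM _ hse))].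
Qed.

Lemma tower_normal_closure B zs : is_subfield B -> is_tower B zs -> exists zs',
  [/\ is_tower B zs', forall x, tower B zs x -> tower B zs' x & khom_closed B (tower B zs')].
Proof.
move=> hB; elim: zs => [|z zs IH] /=.
  by move=> _; exists [::]; split => // s hs y /= hy; rewrite (khom_fix hs).
case=> vzs kzz; have [zs' [vzs' sub_zs' hN]] := IH vzs.
have [E [_ EP permE]] := tower_conj_set hB vzs' hN (sub_zs' _ kzz).
have EN e : e \in E -> tower B zs' e by case/EP => s [hs ->]; exact: (hN s hs _ (sub_zs' _ kzz)).
have hsE s : khom B (tower B zs') s -> forall e, e \in E -> s e \in E.
  by move=> hs e he; rewrite -(perm_mem (permE s hs)) map_f.
have [vN hN'] := khom_closed_qroots hB vzs' hN EN hsE.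
exists (map qroot E ++ zs'); split => //.
have hN'f := tower_subfield (map qroot E ++ zs') hB.
apply: adjoin_min => //; first by move=> x /sub_zs'; apply: tower_catr.
have zzE : z * z \in E by apply/EP; exists id; split.
have qN : tower B (map qroot E ++ zs') (qroot (z * z)).
  by apply: tower_mem; rewrite mem_cat map_f.
by case: (mul_self_eq (esym (qrootK (z * z)))) => ->; last exact: (subfN hN'f qN).
Qed.

Lemma tower_minpoly B zs x : is_subfield B -> is_tower B zs ->
  khom_closed B (tower B zs) -> tower B zs x ->
  exists rs : seq Om, [/\ uniq rs,
    forall r, r \in rs -> exists s, khom B (tower B zs) s /\ r = s x &
    is_minpoly B x (\prod_(r <- rs) ('X - r%:P))].
Proof.
move=> hB vzs hN hx; set N := tower B zs.
have hNf : is_subfield N := tower_subfield zs hB.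
have hB1 := subf1 hB; have hBN : forall y, B y -> N y by move=> y; apply: tower_base.
have [rs [urs rsP permrs]] := tower_conj_set hB vzs hN hx.
have rsN r : r \in rs -> N r by case/rsP => s [hs ->]; apply: hN.
exists rs; split => [| r /rsP //|]; first exact: urs.
split.
- exact: monic_prod_XsubC.
- move=> i; have [Ni _] := khom_prod_XsubC_coef hNf hB1 (khom_id B N) rsN i.
  apply: (tower_fixed hB vzs Ni) => s hs.
  have [_ ->] := khom_prod_XsubC_coef hNf hB1 hs rsN i.
  by rewrite (perm_big _ (permrs s hs)).
- by rewrite root_prod_XsubC; apply/rsP; exists id; split.
- move=> q hq q0 rqx; rewrite size_prod_XsubC; apply: max_poly_roots => //.
  apply/allP => r /rsP [s [hs ->]].
  by rewrite /root -(khom_horner hNf hB1 hs hBN hq hx) (eqP rqx) (khom0 hNf hs).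
Qed.

End QuadraticallyClosed.

Section Conjugates.
Variable Om : fieldType.
Variable F : Om -> Prop.
Hypotheses (hF : is_subfield F) (hchar : (2%:R : Om) != 0)
  (hsq : forall x : Om, exists y, y * y = x).
Implicit Types (K Kn M P : Om -> Prop) (zs : seq Om) (s : Om -> Om) (x y z : Om).

Let hF1 : F 1 := subf1 hF.

Lemma higher_subfield K n : is_subfield K -> is_subfield (higher K n).
Proof. by case: n => [|n] //= _; apply: generated_subfield. Qed.

Lemma higher_succ K n x : higher K n x -> higher K n.+1 x.
Proof. by move=> h; apply: sub_generated; left. Qed.

Lemma higher_base K n x : K x -> higher K n x.
Proof. by elim: n => [|n IH] // /IH; apply: higher_succ. Qed.

Definition in_tower x := exists zs, is_tower F zs /\ tower F zs x.

Lemma in_tower_list (l : seq Om) : (forall e, e \in l -> in_tower e) ->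
  exists zs, is_tower F zs /\ forall e, e \in l -> tower F zs e.
Proof.
elim: l => [|e l IH] hl; first by exists [::].
have [zs [vzs hzs]] := IH (fun e' he' => hl e' (@mem_behead _ (e :: l) e' he')).
have [zs' [vzs' he]] := hl e (mem_head _ _).
exists (zs' ++ zs); split; first exact: is_tower_cat.
by move=> e'; rewrite inE => /orP[/eqP-> | /hzs]; [exact: tower_catl | exact: tower_catr].
Qed.

Lemma in_tower_subfield : is_subfield in_tower.
Proof.
have in2 x y : in_tower x -> in_tower y ->
    exists zs, [/\ is_tower F zs, is_subfield (tower F zs), tower F zs x & tower F zs y].
  move=> ix iy; have [|zs [vzs hl]] := in_tower_list (l := [:: x; y]).
    by move=> e; rewrite !inE => /orP[] /eqP ->.
  by exists zs; split; [| exact: tower_subfield | apply: hl; rewrite !inE eqxx ?orbT ..].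
split.
- by exists [::]; split => //; exact: subf0.
- by exists [::]; split => //; exact: subf1.
- move=> x y ix iy; have [zs [vzs hT tx ty]] := in2 x y ix iy.
  by exists zs; split; [| exact: subfB].
- move=> x y ix iy; have [zs [vzs hT tx ty]] := in2 x y ix iy.
  by exists zs; split; [| exact: subfM].
- by move=> x [zs [vzs tx]]; exists zs; split; [| exact: (subfV (tower_subfield zs hF))].
Qed.

Lemma in_tower_sqrt r : in_tower (r * r) -> in_tower r.
Proof. by case=> zs [vzs trr]; exists (r :: zs); split => //; exact: adjoin_gen. Qed.

Lemma khom_extend_in_tower (l : seq Om) zs s : (forall e, e \in l -> in_tower e) ->
  is_tower F zs -> khom F (tower F zs) s ->
  exists zs' s', [/\ is_tower F zs', khom F (tower F zs') s', forall e, e \in l -> tower F zs' e &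
    forall x, tower F zs x -> s' x = s x].
Proof.
move=> il vzs hs; have [zs' [vzs' hl]] := in_tower_list il.
have [s' [hs' s'E]] := khom_extend hsq hF (@tower_base _ F zs) hF1 vzs vzs' hs.
by exists zs', s'.
Qed.

Definition conj_in P x :=
  in_tower x /\ forall zs s, is_tower F zs -> tower F zs x -> khom F (tower F zs) s -> P (s x).

Lemma conj_in_mono P P' x : (forall y, P y -> P' y) -> conj_in P x -> conj_in P' x.
Proof. by move=> hP [ix hx]; split => // zs s vzs tx hs; apply: hP; exact: (hx zs s vzs tx hs). Qed.

Lemma conj_in_subfield P : is_subfield P -> is_subfield (conj_in P).
Proof.
move=> hP.
have conj_in_op (f : Om -> Om -> Om) x y : conj_in P x -> conj_in P y ->
    (forall zs s, is_tower F zs -> tower F zs x -> tower F zs y -> khom F (tower F zs) s ->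
       s (f x y) = f (s x) (s y)) ->
    (forall a b, P a -> P b -> P (f a b)) ->
    forall zs s, is_tower F zs -> tower F zs (f x y) -> khom F (tower F zs) s -> P (s (f x y)).
  move=> [ix hx] [iy hy] sf Pf zs s vzs txy hs.
  have [|zs' [s' [vzs' hs' hl s'E]]] := khom_extend_in_tower (l := [:: x; y]) _ vzs hs.
    by move=> e; rewrite !inE => /orP[] /eqP ->.
  have tx : tower F zs' x by apply: hl; rewrite mem_head.
  have ty : tower F zs' y by apply: hl; rewrite !inE eqxx orbT.
  rewrite -s'E // (sf zs' s' vzs' tx ty hs').
  by apply: Pf; [exact: (hx zs' s') | exact: (hy zs' s')].
split.
- split; first exact: (subf0 in_tower_subfield).
  by move=> zs s _ _ hs; rewrite (khom0 (tower_subfield zs hF) hs); exact: subf0.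
- split; first exact: (subf1 in_tower_subfield).
  by move=> zs s _ _ hs; rewrite (khom1 hF1 hs); exact: subf1.
- move=> x y cx cy; split; first exact: (subfB in_tower_subfield cx.1 cy.1).
  apply: (conj_in_op (fun a b => a - b) x y cx cy) => [zs s _ tx ty hs|]; last exact: subfB.
  exact: (khomB (tower_subfield zs hF) hs tx ty).
- move=> x y cx cy; split; first exact: (subfM in_tower_subfield cx.1 cy.1).
  apply: (conj_in_op (fun a b => a * b) x y cx cy) => [zs s _ tx ty hs|]; last exact: subfM.
  exact: (khomM hs tx ty).
- move=> x cx; split; first exact: (subfV in_tower_subfield cx.1).
  apply: (conj_in_op (fun a _ => a^-1) x x cx cx) => [zs s _ tx _ hs|a _ pa _].
    exact: (khomV (tower_subfield zs hF) hF1 hs tx).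
  exact: (subfV hP pa).
Qed.

Definition conj_stable K M := forall zs s x, is_tower F zs -> (forall k, K k -> tower F zs k) ->
  khom K (tower F zs) s -> tower F zs x -> M x -> M (s x).

Lemma galois_conj_stable K M : galois_ext K M -> conj_stable K M.
Proof.
move=> [hK _ _ galM] zs s x vzs KT hs tx Mx.
have [p [[_ pK px _] [rs [_ rsM pE]]]] := galM x Mx.
have : root p (s x).
  by rewrite /root -(khom_horner (tower_subfield zs hF) (subf1 hK) hs KT pK tx) (eqP px)
    (khom0 (tower_subfield zs hF) hs).
by rewrite pE root_prod_XsubC => /rsM.
Qed.

Definition fin_normal K := [/\ is_subfield K, forall x, F x -> K x,
  exists zs, is_tower F zs /\ (forall x, K x -> tower F zs x) & forall x, K x -> conj_in K x].

Lemma conj_stable_galois K M : fin_normal K -> is_subfield M -> (forall x, K x -> M x) ->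
  (forall x, M x -> in_tower x) -> conj_stable K M -> galois_ext K M.
Proof.
move=> [hK FK [zsK [vzsK KzsK]] _] hM KM Mt hst; split => // x Mx.
have [zs [vzs tx]] := Mt x Mx.
have [zsN [vN subN hN]] := tower_normal_closure hsq hF (is_tower_cat vzs vzsK).
have KN k : K k -> tower F zsN k by move=> kk; apply: subN; apply: tower_catr; exact: KzsK.
have eqN := tower_over_eq hF FK KN.
have hsK s : khom K (tower K zsN) s -> khom K (tower F zsN) s.
  by apply: khom_subE => y /eqN.
have hKN : khom_closed K (tower K zsN).
  move=> s hs y /eqN ny; apply/eqN; apply: hN ny.
  by apply: khom_subB FK _; exact: hsK.
have txN : tower K zsN x by apply/eqN; apply: subN; exact: tower_catl.
have [rs [urs rsP minp]] := tower_minpoly hchar hsq hK (is_tower_mono FK vN) hKN txN.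
exists (\prod_(r <- rs) ('X - r%:P)); split => //; exists rs; split => // r /rsP [s [hs ->]].
exact: (hst zsN s x vN KN (hsK s hs) (proj1 (eqN x) txN) Mx).
Qed.

Lemma khom_conjugate K zs s sg : fin_normal K -> is_tower F zs -> khom_closed F (tower F zs) ->
  (forall k, K k -> tower F zs k) -> khom F (tower F zs) s -> khom K (tower F zs) sg ->
  exists rh, khom K (tower F zs) rh /\ forall y, tower F zs y -> sg (s y) = s (rh y).
Proof.
move=> [hK FK _ Kconj] vzs hN KN hs hsg; set N := tower F zs.
have [ip [hip ipK sipK]] := khom_closed_inv hsq hF vzs hN hs.
have sgF : khom F N sg := khom_subB FK hsg.
have [_ rhD rhM] : khom F N (ip \o (sg \o s)).
  by apply: khom_comp hip (khom_comp sgF hs (hN s hs)) _ => y /(hN s hs); exact: hN.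
exists (ip \o (sg \o s)); split.
  split => // k kk /=; have Kk := (Kconj k kk).2 zs s vzs (KN k kk) hs.
  by rewrite (khom_fix hsg Kk) sipK //; exact: KN.
by move=> y ny /=; rewrite (ipK _ (hN sg sgF _ (hN s hs y ny))).2.
Qed.

Lemma quad_ext_sqrt Kn M : is_subfield Kn -> quad_ext Kn M ->
  exists r, [/\ M r, Kn (r * r) & forall z, M z -> quad_span Kn r z].
Proof.
move=> hKn [hM KnM [y0 [My0 _ y0span]]].
pose h := (2%:R : Om)^-1.
have Kh : Kn h by apply: subfV => //; exact: subf_nat.
have [al [be [kal kbe e2]]] := y0span (y0 * y0) (subfM hM My0 My0).
(* complete the square: r = y0 - be / 2 satisfies r^2 = al + be^2 / 4 *)
pose r := y0 - be * h.
have err : r * r = al + be * be * (h * h).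
  have h2 : h + h = 1 by rewrite -mulr2n -mulr_natr mulVf.
  have -> : r * r = y0 * y0 - be * y0 * (h + h) + be * be * (h * h) by rewrite /r; ring.
  by rewrite h2 e2; ring.
exists r; split.
- by apply: subfB => //; apply: KnM; exact: subfM.
- by rewrite err; apply: subfD => //; do 2 apply: subfM => //.
- move=> z /y0span [u [v [ku kv ->]]]; exists (u + v * (be * h)), v; split => //.
    by apply: subfD => //; do 2 apply: subfM => //.
  by rewrite /r; ring.
Qed.

Lemma quad_ext_adjoin Kn w : is_subfield Kn -> Kn (w * w) -> ~ Kn w -> quad_ext Kn (adjoin Kn w).
Proof.
move=> hKn kww nkw; split; [exact: adjoin_subfield | by move=> x; exact: adjoin_base |].
by exists w; split => //; [exact: adjoin_gen | move=> z /(adjoin_quadE _ hKn kww)].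
Qed.

Lemma khom_quad_span Kn r a b zs s : (forall x, Kn x -> conj_in Kn x) -> Kn a -> Kn b ->
  in_tower r -> is_tower F zs -> khom F (tower F zs) s -> tower F zs (a + b * r) ->
  exists zs' s', [/\ is_tower F zs', khom F (tower F zs') s', tower F zs' r,
    forall x, tower F zs x -> s' x = s x &
    exists a' b', [/\ Kn a', Kn b' & s (a + b * r) = a' + b' * s' r]].
Proof.
move=> Knconj ka kb ir vzs hs ty.
have [|zs' [s' [vzs' hs' habr s'E]]] := khom_extend_in_tower (l := [:: a; b; r]) _ vzs hs.
  move=> e; rewrite !inE => /orP[/eqP-> | /orP[] /eqP-> //].
  - exact: (Knconj _ ka).1.
  - exact: (Knconj _ kb).1.
have ta : tower F zs' a by apply: habr; rewrite mem_head.
have tb : tower F zs' b by apply: habr; rewrite !inE eqxx orbT.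
have tr : tower F zs' r by apply: habr; rewrite !inE eqxx !orbT.
exists zs', s'; split => //; exists (s' a), (s' b); split.
- exact: (proj2 (Knconj _ ka) zs' s' vzs' ta hs').
- exact: (proj2 (Knconj _ kb) zs' s' vzs' tb hs').
- by rewrite -s'E // (khomD hs' ta (subfM (tower_subfield zs' hF) tb tr)) (khomM hs' tb tr).
Qed.

Section ConjugateQuadratic.
Variables (K Kn M : Om -> Prop) (r : Om) (zs : seq Om) (s : Om -> Om).
Hypotheses (finK : fin_normal K) (hKn : is_subfield Kn) (KKn : forall x, K x -> Kn x)
  (Knconj : forall x, Kn x -> conj_in Kn x) (Krr : Kn (r * r))
  (galM : galois_ext K M) (KnM : forall x, Kn x -> M x) (Mr : M r)
  (Mspan : forall z, M z -> quad_span Kn r z)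
  (vzs : is_tower F zs) (tr : tower F zs r) (hs : khom F (tower F zs) s).

Let Ksrr : Kn (s r * s r).
Proof.
rewrite -(khomM hs tr tr); apply: (proj2 (Knconj Krr) zs s vzs _ hs).
exact: (subfM (tower_subfield zs hF) tr tr).
Qed.

Lemma adjoin_conj_preimage zsN s2 u v : is_tower F zsN -> khom_closed F (tower F zsN) ->
  (forall y, tower F zs y -> tower F zsN y) -> khom F (tower F zsN) s2 ->
  (forall y, tower F zs y -> s2 y = s y) -> Kn u -> Kn v -> tower F zsN u -> tower F zsN v ->
  exists z0, [/\ tower F zsN z0, M z0 & s2 z0 = u + v * s r].
Proof.
move=> vN hN NzN hs2 s2E ku kv Nu Nv; set N := tower F zsN.
have hNf : is_subfield N := tower_subfield zsN hF; have [_ hM _ _] := galM.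
have [ip [hip ipK _]] := khom_closed_inv hsq hF vN hN hs2.
have [Nipu s2ipu] := ipK u Nu; have [Nipv s2ipv] := ipK v Nv.
have Nr : N r := NzN r tr.
exists (ip u + ip v * r); split; first exact: (subfD hNf Nipu (subfM hNf Nipv Nr)).
  apply: (subfD hM); first exact/KnM/(proj2 (Knconj ku) zsN ip vN Nu hip).
  by apply: (subfM hM) Mr; apply/KnM/(proj2 (Knconj kv) zsN ip vN Nv hip).
by rewrite (khomD hs2 Nipu (subfM hNf Nipv Nr)) (khomM hs2 Nipv Nr) s2ipu s2ipv s2E.
Qed.

(* With s2 extending s to a tower N closed under conjugation, a K-conjugate sg (s2 z0) of
   an element of Kn(s r) is s2 (rh z0) for the K-conjugate rh z0 = s2^-1 (sg (s2 z0)) of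
   z0 in M; as rh z0 = a + b r lies in M, its image lies in Kn(s2 r) = Kn(s r). *)
Lemma conj_stable_adjoin_conj : conj_stable K (adjoin Kn (s r)).
Proof.
move=> zs' sg x vzs' Kzs' hsg tx /(adjoin_quadE _ hKn Ksrr) [u [v [ku kv ex]]].
have [hK FK _ _] := finK.
have [|zuv [vuv huv]] := in_tower_list (l := [:: u; v]).
  by move=> e; rewrite !inE => /orP[] /eqP ->; [exact: (Knconj ku).1 | exact: (Knconj kv).1].
have [zsN [vN subN hN]] := tower_normal_closure hsq hF (is_tower_cat vzs' (is_tower_cat vzs vuv)).
set N := tower F zsN.
have NzN y : tower F zs y -> N y by move=> h; apply: subN; apply: tower_catr; exact: tower_catl.
have Nu : N u by apply: subN; do 2 apply: tower_catr; apply: huv; rewrite mem_head.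
have Nv : N v by apply: subN; do 2 apply: tower_catr; apply: huv; rewrite !inE eqxx orbT.
have KN k : K k -> N k by move/Kzs' => h; apply: subN; exact: tower_catl.
have [s2 [hs2 s2E]] := khom_extend hsq hF (@tower_base _ F zs) hF1 vzs vN hs.
have [sg2 [hsg2 sg2E]] := khom_extend hsq hF Kzs' (subf1 hK) vzs' vN hsg.
have [z0 [Nz0 Mz0 s2z0]] := adjoin_conj_preimage vN hN NzN hs2 s2E ku kv Nu Nv.
have [rh [hrh rhE]] := khom_conjugate finK vN hN KN hs2 hsg2.
have [a [b [ka kb eab]]] := Mspan (galois_conj_stable galM vN KN hrh Nz0 Mz0).
have Nab : N (a + b * r) by rewrite -eab; apply: hN Nz0; apply: khom_subB FK hrh.
have [zs3 [s3 [_ _ _ s3E [a' [b' [ka' kb' e3]]]]]] :=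
  khom_quad_span Knconj ka kb (ex_intro _ zs (conj vzs tr)) vN hs2 Nab.
rewrite -sg2E // ex -s2z0 rhE // eab e3 (s3E _ (NzN r tr)) (s2E _ tr).
by apply/(adjoin_quadE _ hKn Ksrr); exists a', b'.
Qed.

Lemma galois_adjoin_conj : galois_ext K (adjoin Kn (s r)).
Proof.
have [hK _ _ _] := finK.
apply: conj_stable_galois => //; first exact: adjoin_subfield.
- by move=> x kx; apply: adjoin_base; exact: KKn.
- apply: adjoin_min in_tower_subfield _ _ => [x kx|]; first exact: (Knconj kx).1.
  exact: in_tower_sqrt (Knconj Ksrr).1.
- exact: conj_stable_adjoin_conj.
Qed.

End ConjugateQuadratic.

Lemma conj_in_next_step K Kn : fin_normal K -> is_subfield Kn -> (forall x, K x -> Kn x) ->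
  (forall x, Kn x -> conj_in Kn x) -> forall x, next_step K Kn x -> conj_in (next_step K Kn) x.
Proof.
move=> finK hKn KKn Knconj; set Kn1 := next_step K Kn.
have hKn1 : is_subfield Kn1 := generated_subfield _.
have KnKn1 x : Kn x -> Kn1 x by move=> kx; apply: sub_generated; left.
apply: generated_min (conj_in_subfield hKn1) _ => y [ky | [M [qM gM My]]].
  exact: conj_in_mono KnKn1 (Knconj y ky).
have [_ KnM _] := qM; have [r [Mr Krr Mspan]] := quad_ext_sqrt hKn qM.
have [a [b [ka kb ->]]] := Mspan y My.
have ir : in_tower r := in_tower_sqrt (Knconj _ Krr).1.
split.
  apply: (subfD in_tower_subfield (Knconj _ ka).1).
  exact: (subfM in_tower_subfield (Knconj _ kb).1 ir).
move=> zs s vzs ty hs.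
have [zs1 [s1 [vzs1 hs1 tr _ [a' [b' [ka' kb' ->]]]]]] := khom_quad_span Knconj ka kb ir vzs hs ty.
have Kn1r : Kn1 (s1 r).
  have [kr|nkr] := classic (Kn (s1 r)); first exact: KnKn1.
  have Ks1rr : Kn (s1 r * s1 r).
    rewrite -(khomM hs1 tr tr); apply: (proj2 (Knconj _ Krr) zs1 s1 vzs1 _ hs1).
    exact: (subfM (tower_subfield zs1 hF) tr tr).
  apply: sub_generated; right; exists (adjoin Kn (s1 r)); split; last exact: adjoin_gen.
    exact: quad_ext_adjoin.
  exact: (galois_adjoin_conj finK hKn KKn Knconj Krr gM KnM Mr Mspan vzs1 tr hs1).
exact: (subfD hKn1 (KnKn1 _ ka') (subfM hKn1 (KnKn1 _ kb') Kn1r)).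
Qed.

Lemma higher_conj_in K n : fin_normal K -> forall x, higher K n x -> conj_in (higher K n) x.
Proof.
move=> finK; have [hK _ _ Kconj] := finK.
elim: n => [|n IH] //=; apply: conj_in_next_step => //; first exact: higher_subfield.
by move=> x; apply: higher_base.
Qed.

Lemma fin_normal_base : fin_normal F.
Proof.
split => //; first by exists [::].
by move=> x fx; split; [exists [::] | move=> zs s _ _ hs; rewrite (khom_fix hs)].
Qed.

Lemma fin_normal_adjoin t : F (t * t) -> fin_normal (adjoin F t).
Proof.
move=> ftt; have hL := adjoin_subfield F t.
split => //; [by move=> x; apply: adjoin_base | by exists [:: t] |].
apply: adjoin_min (conj_in_subfield hL) _ _ => [x fx|].
  by split; [exists [::] | move=> zs s _ _ hs; rewrite (khom_fix hs) //; exact: adjoin_base].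
split; first by exists [:: t]; split => //; exact: adjoin_gen.
move=> zs s _ tt hs; have e : s t * s t = t * t by rewrite -(khomM hs tt tt) (khom_fix hs).
by case: (mul_self_eq e) => ->; [exact: adjoin_gen | exact: (subfN hL adjoin_gen)].
Qed.

Lemma galois_higher_meet K1 K2 n1 n2 : fin_normal K1 -> fin_normal K2 ->
  galois_ext F (fun x => higher K1 n1 x /\ higher K2 n2 x).
Proof.
move=> fin1 fin2; have [hK1 FK1 _ _] := fin1; have [hK2 FK2 _ _] := fin2.
apply: conj_stable_galois fin_normal_base _ _ _ _.
- by apply: subfieldI; exact: higher_subfield.
- by move=> x fx; split; apply: higher_base; [exact: FK1 | exact: FK2].
- by move=> x [/(higher_conj_in fin1) []].
- move=> zs s x vzs _ hs tx [/(higher_conj_in fin1) [_ c1] /(higher_conj_in fin2) [_ c2]].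
  by split; [exact: (c1 zs s vzs tx hs) | exact: (c2 zs s vzs tx hs)].
Qed.

End Conjugates.

Theorem lemma4 (Om : fieldType) (F : Om -> Prop)
  (hF : is_subfield F) (hchar : (2%:R : Om) != 0)
  (hOm : is_quadratic_closure F)
  (a : Om) (Fa : F a) (a0 : a != 0)
  (nsq : ~ (exists b, F b /\ b * b = a))
  (s : Om) (hs : s * s = a) :
  galois_ext F (fun x => higher F 3 x /\ higher (adjoin F s) 2 x).
Proof.
have [hsq _] := hOm.
have Fss : F (s * s) by rewrite hs.
exact: (galois_higher_meet hF hchar hsq 3 2 (fin_normal_base hF) (fin_normal_adjoin hF hsq Fss)).
Qed.
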